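(* (Comparison Lemma for continued fractions.) Let $\tilde x=(x_1,\dots,x_n)$ and $\tilde y=(y_1,\dots,y_n)$ be in $\mathbb{N}^n$ with $x_k\ge y_k$ for $k=1,\dots,n$. Then $\mu(I(\tilde x))\le\mu(I(\tilde y))$.
   Context: $\mu$ is the Gauss measure on $(0,1)$, $d\mu(\omega)=\frac{d\omega}{(\log 2)(1+\omega)}$. For $(a_1,\dots,a_n)\in\mathbb{N}^n$, the cylinder $I(a_1,\dots,a_n)$ is the set of $\omega\in(0,1)$ whose continued fraction expansion $\omega=\cfrac{1}{a_1(\omega)+\cfrac{1}{a_2(\omega)+\cdots}}$ begins with $a_1,\dots,a_n$. *)

From HB Require Import structures.
From mathcomp Require Import all_boot all_order all_algebra.
From mathcomp Require Import all_classical all_reals all_analysis.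
Set Implicit Arguments. Unset Strict Implicit. Unset Printing Implicit Defensive.
Import Order.TTheory GRing.Theory Num.Theory.
Local Open Scope classical_set_scope.
Local Open Scope ring_scope.

Definition gauss_map (R : realType) (w : R) : R := w^-1 - (Num.floor w^-1)%:~R.

(* Cylinder I(a_1,...,a_n): points w of (0,1) whose continued fraction
   expansion begins with a_1,...,a_n, i.e. for each k < n, T^k w <> 0
   (the expansion has not terminated) and a_{k+1}(w) = floor(1 / T^k w) = a_(k+1). *)
Definition cylinder (R : realType) (n : nat) (a : 'I_n -> nat) : set R :=
  [set w | 0 < w < 1 /\
     forall k : 'I_n, iter k (@gauss_map R) w != 0 /\
                      Num.floor ((iter k (@gauss_map R) w)^-1) = (a k)%:Z].

Definition gauss_measure (R : realType) (A : set R) : \bar R :=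
  (\int[@lebesgue_measure R]_(w in A `&` `]0%R, 1%R[) ((ln 2 * (1 + w))^-1)%:E)%E.

(* The cylinder I(a_1, ..., a_n) consists of the numbers
   [0; a_1, ..., a_(n-1), a_n + t] with t in [0, 1), and t |-> [0; ..., a_n + t]
   is the Moebius map t |-> (p + p' t) / (q + q' t) built from the last two
   convergents.  Hence, up to endpoints, I is the interval between p / q and
   (p + p') / (q + q'), and integrating the Gauss density over it with
   p' q - p q' = (-1)^n gives mu(I) = |log (1 + (-1)^n / D)| / log 2 for
   D = (q + q') (q + p), which decreases as D grows.  Each of p, p', q, q' is
   monotone in the digits a_k, hence so is D. *)

From HB Require Import structures.
From mathcomp Require Import all_boot all_order all_algebra.
From mathcomp Require Import all_classical all_reals all_analysis.
From mathcomp Require Import measurable_realfun ring lra.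
Import Order.TTheory GRing.Theory Num.Theory.
Import numFieldNormedType.Exports.
Local Open Scope classical_set_scope.
Local Open Scope ring_scope.

Lemma ge0_le_integral_setS d (T : measurableType d) (R : realType)
    (mu : {measure set T -> \bar R}) (D E : set T) (f : T -> \bar R) :
  D `<=` E -> (forall x, E x -> 0 <= f x)%E ->
  (\int[mu]_(x in D) f x <= \int[mu]_(x in E) f x)%E.
Proof.
move=> DE f0.
rewrite !ge0_integralE; [|by move=> x /f0|by move=> x /DE /f0].
apply: ereal_sup_le => _ [h /= hD <-]; exists h => //= x.
apply: (le_trans (hD x)); rewrite /patch.
case: ifPn => xD; first by rewrite ifT // inE; apply: DE; rewrite -inE.
by case: ifPn => // /[1!inE] /f0.
Qed.

Section GaussDensity.
Variable R : realType.
Local Notation mu := (@lebesgue_measure R).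

Definition gauss_cdf (w : R) : R := (ln 2)^-1 * ln (1 + w).

Lemma ln2_gt0 : 0 < ln (2 : R).
Proof. by rewrite ln_gt0 // ltr1n. Qed.

Lemma is_derive_gauss_cdf (w : R) : 0 < 1 + w ->
  is_derive w 1 gauss_cdf ((ln 2 * (1 + w))^-1).
Proof.
move=> w_gt.
have shift_derive : is_derive w 1 (fun x : R => 1 + x) 1.
  have -> : (fun x : R => 1 + x) = shift 1 by apply/funext => x; rewrite /shift addrC.
  exact: is_derive_shift.
have ln_derive : is_derive w 1 (@ln R \o (fun x : R => 1 + x)) ((1 + w)^-1 * 1).
  by apply: is_derive1_comp; apply: is_derive1_ln.
have -> : (ln 2 * (1 + w))^-1 = (ln 2)^-1 *: ((1 + w)^-1 * 1) by rewrite mulr1 invfM.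
have -> : gauss_cdf = (ln 2)^-1 \*: (@ln R \o (fun x : R => 1 + x)) by [].
exact: is_deriveZ.
Qed.

Lemma continuous_gauss_cdf (x : R) : 0 < 1 + x -> {for x, continuous gauss_cdf}.
Proof.
move=> x_gt; apply: differentiable_continuous; apply/derivable1_diffP.
by have [] := is_derive_gauss_cdf _ x_gt.
Qed.

Lemma continuous_gauss_density (x : R) : 0 < 1 + x ->
  {for x, continuous (fun w : R => (ln 2 * (1 + w))^-1)}.
Proof.
move=> x_gt; apply: continuousV; first by rewrite mulf_neq0 // gt_eqF // ln2_gt0.
apply: continuousM; first exact: cvg_cst.
by apply: continuousD; [exact: cvg_cst|exact: cvg_id].
Qed.

Lemma integral_gauss_density_cc (l r : R) : 0 <= l -> l < r ->
  (\int[mu]_(w in `[l, r]) ((ln 2 * (1 + w))^-1)%:E = (gauss_cdf r - gauss_cdf l)%:E)%E.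
Proof.
move=> l_ge0 lr.
have pos x : l <= x -> 0 < 1 + x.
  by move=> lx; apply: (lt_le_trans ltr01); rewrite lerDl (le_trans l_ge0).
rewrite (continuous_FTC2 _ _ (F := gauss_cdf)) //.
- apply: continuous_in_subspaceT => x; rewrite inE /= in_itv /= => /andP[lx _].
  exact: continuous_gauss_density (pos _ lx).
- split.
  + move=> x; rewrite in_itv /= => /andP[lx _].
    by have [] := is_derive_gauss_cdf _ (pos _ (ltW lx)).
  + by apply: cvg_at_right_filter; exact: continuous_gauss_cdf (pos _ (lexx _)).
  + by apply: cvg_at_left_filter; exact: continuous_gauss_cdf (pos _ (ltW lr)).
- move=> x; rewrite in_itv /= => /andP[lx _].
  by have [_ <-] := is_derive_gauss_cdf _ (pos _ (ltW lx)); rewrite derive1E.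
Qed.

Lemma integral_gauss_density_oo (l r : R) : 0 <= l -> l < r ->
  (\int[mu]_(w in `]l, r[) ((ln 2 * (1 + w))^-1)%:E = (gauss_cdf r - gauss_cdf l)%:E)%E.
Proof.
move=> l_ge0 lr; rewrite -integral_gauss_density_cc //.
rewrite -(@integral_itv_bndoo _ _ _ _ true false) //.
apply/measurable_EFinP; apply: open_continuous_measurable_fun; first exact: interval_open.
move=> x; rewrite inE /= in_itv /= => /andP[lx _].
by apply: continuous_gauss_density; rewrite ltr_wpDr // ltW // (le_lt_trans l_ge0).
Qed.

End GaussDensity.

Arguments gauss_cdf {R}.
Arguments ln2_gt0 {R}.

Lemma nth_map_enum_ord {T} (x0 : T) n (a : 'I_n -> T) (k : 'I_n) :
  nth x0 (map a (enum 'I_n)) k = a k.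
Proof. by rewrite (nth_map k) ?nth_ord_enum // size_enum_ord. Qed.

Lemma floor_natD (R : archiRealFieldType) (a : nat) (t : R) :
  0 <= t < 1 -> Num.floor (a%:R + t) = a%:Z.
Proof. by move=> /andP[t0 t1]; apply: floor_def; rewrite intrD -pmulrn; lra. Qed.

Section ContinuedFractions.
Variable R : realType.
Local Notation T := (@gauss_map R).

Definition cf_begins (s : seq nat) (w : R) := forall k, (k < size s)%N ->
  iter k T w != 0 /\ Num.floor ((iter k T w)^-1) = (nth 0%N s k)%:Z.

Definition cf_cylinder (s : seq nat) : set R := [set w | 0 < w < 1 /\ cf_begins s w].

Lemma cf_begins_cons a s w : cf_begins (a :: s) w <->
  [/\ w != 0, Num.floor w^-1 = a%:Z & cf_begins s (T w)].
Proof.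
split=> [h|[w0 wa hs] [|k] ks] //.
- have [w0 wa] := h 0%N isT; split => // k ks.
  by have := h k.+1 ks; rewrite iterSr.
- by rewrite iterSr; apply: hs.
Qed.

Lemma cylinder_enum n (a : 'I_n -> nat) :
  cylinder a = cf_cylinder (map a (enum 'I_n)) :> set R.
Proof.
apply/seteqP; split => w [w01 hw]; split => // k.
- rewrite size_map size_enum_ord => kn.
  by have := hw (Ordinal kn); rewrite -(nth_map_enum_ord 0%N _ a).
- by have := hw k; rewrite size_map size_enum_ord ltn_ord nth_map_enum_ord; apply.
Qed.

Definition cf_eval (s : seq nat) (t : R) : R := foldr (fun a t => (a%:R + t)^-1) t s.

Lemma cf_eval_ge0 s t : 0 <= t -> 0 <= cf_eval s t.
Proof. by move=> t0; elim: s => //= a s IH; rewrite invr_ge0 addr_ge0. Qed.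

Lemma cf_begins_evalP s w : cf_begins s w -> 0 <= w < 1 ->
  exists2 t, 0 <= t < 1 & w = cf_eval s t.
Proof.
elim: s w => [|a s IH] w; first by move=> _ w01; exists w.
move=> /cf_begins_cons[w0 wa hs] _.
have := floor_le w^-1; have := floorD1_gt w^-1.
rewrite wa intrD -pmulrn => w_lt w_ge.
have /(IH _ hs)[t t01 Tw] : 0 <= T w < 1 by rewrite /gauss_map wa -pmulrn; lra.
by exists t => //=; rewrite -Tw /gauss_map wa -pmulrn addrC subrK invrK.
Qed.

Lemma cf_eval_begins s t : all (fun a => 0 < a)%N s -> 0 < t < 1 ->
  0 < cf_eval s t < 1 /\ cf_begins s (cf_eval s t).
Proof.
move=> + t01; elim: s => [|a s IH] /=; first by move=> _; split => // k.
move=> /andP[a_gt0 /IH[v01 hv]]; set v := cf_eval s t in v01 hv *.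
have a_ge1 : 1 <= a%:R :> R by rewrite ler1n.
have v01' : 0 <= v < 1 by move: v01 => /andP[? ?]; apply/andP; split; lra.
have av_gt1 : 1 < a%:R + v by move: v01 => /andP[? ?]; lra.
have av_gt0 : 0 < a%:R + v := lt_trans ltr01 av_gt1.
split; first by rewrite invr_gt0 av_gt0 invf_lt1.
apply/cf_begins_cons; rewrite invrK floor_natD //; split => //.
  by rewrite invr_eq0 gt_eqF.
by rewrite /gauss_map invrK floor_natD // -pmulrn addrC addKr.
Qed.

Fixpoint cf_coefs (s : seq nat) : (nat * nat) * (nat * nat) :=
  if s is a :: s' then
    let: ((p, p'), (q, q')) := cf_coefs s' in ((q, q'), (a * q + p, a * q' + p'))%N
  else ((0, 1), (1, 0))%N.

Definition cf_num0 s := (cf_coefs s).1.1.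
Definition cf_num1 s := (cf_coefs s).1.2.
Definition cf_den0 s := (cf_coefs s).2.1.
Definition cf_den1 s := (cf_coefs s).2.2.

Local Notation num0 s := ((cf_num0 s)%:R : R).
Local Notation num1 s := ((cf_num1 s)%:R : R).
Local Notation den0 s := ((cf_den0 s)%:R : R).
Local Notation den1 s := ((cf_den1 s)%:R : R).

Lemma cf_coefs_cons a s :
  [/\ cf_num0 (a :: s) = cf_den0 s, cf_num1 (a :: s) = cf_den1 s,
      cf_den0 (a :: s) = (a * cf_den0 s + cf_num0 s)%N
    & cf_den1 (a :: s) = (a * cf_den1 s + cf_num1 s)%N].
Proof.
by rewrite /cf_num0 /cf_num1 /cf_den0 /cf_den1 /=; case: (cf_coefs s) => [[p p'] [q q']].
Qed.

Lemma cf_den0_gt0 s : all (fun a => 0 < a)%N s -> (0 < cf_den0 s)%N.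
Proof.
elim: s => [|a s IH] //= /andP[a_gt0 /IH q_gt0]; have [_ _ -> _] := cf_coefs_cons a s.
by rewrite ltn_addr // muln_gt0 a_gt0.
Qed.

Lemma cf_num0_gt0 s : all (fun a => 0 < a)%N s -> s != [::] -> (0 < cf_num0 s)%N.
Proof.
by case: s => [|a s] //= /andP[_ /cf_den0_gt0]; have [-> _ _ _] := cf_coefs_cons a s.
Qed.

Lemma cf_coefs_det s : num1 s * den0 s - num0 s * den1 s = (-1) ^+ size s.
Proof.
elim: s => [|a s IH]; first by rewrite /cf_num0 /cf_num1 /cf_den0 /cf_den1 /=; ring.
have [-> -> -> ->] := cf_coefs_cons a s.
by rewrite /= exprS -IH !natrD !natrM; ring.
Qed.

Lemma cf_coefs_mono s s' : size s' = size s -> (forall k, nth 0 s' k <= nth 0 s k)%N ->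
  [/\ cf_num0 s' <= cf_num0 s, cf_num1 s' <= cf_num1 s,
      cf_den0 s' <= cf_den0 s & cf_den1 s' <= cf_den1 s]%N.
Proof.
elim: s s' => [|a s IH] [|a' s'] //= [size_s'] le_s'.
have [le_p le_p' le_q le_q'] := IH s' size_s' (fun k => le_s' k.+1).
have [-> -> -> ->] := cf_coefs_cons a s; have [-> -> -> ->] := cf_coefs_cons a' s'.
by split => //; apply: leq_add => //; apply: leq_mul => //; apply: (le_s' 0%N).
Qed.

Lemma cf_eval_mobius s t : all (fun a => 0 < a)%N s -> 0 <= t ->
  cf_eval s t = (num0 s + num1 s * t) / (den0 s + den1 s * t).
Proof.
move=> + t0; elim: s => [|a s IH] /=.
  by rewrite /cf_num0 /cf_num1 /cf_den0 /cf_den1 /= mul0r mul1r add0r addr0 divr1.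
move=> /andP[a_gt0 s_pos]; rewrite IH //; have [-> -> -> ->] := cf_coefs_cons a s.
have den_gt0 : 0 < den0 s + den1 s * t by rewrite ltr_wpDr ?mulr_ge0 // ltr0n cf_den0_gt0.
have num_ge0 : 0 <= num0 s + num1 s * t by rewrite addr_ge0 // mulr_ge0.
have a_ge1 : 1 <= a%:R :> R by rewrite ler1n.
rewrite !natrD !natrM; move: den_gt0 num_ge0 a_ge1.
move: (den0 s) (den1 s) (num0 s) (num1 s) (a%:R : R) => q q' p p' b den_gt0 num_ge0 b_ge1.
have -> : b * q + p + (b * q' + p') * t = b * (q + q' * t) + (p + p' * t) by ring.
have : 0 < b * (q + q' * t) + (p + p' * t).
  by rewrite ltr_wpDr // mulr_gt0 // (lt_le_trans ltr01).
by move=> ?; field; rewrite !gt_eqF.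
Qed.

Definition cf_sign (s : seq nat) : R := (-1) ^+ size s.

(* [cf_disp s t] is the distance from [cf_eval s 0] to [cf_eval s t]. *)
Definition cf_disp s t : R := t / (den0 s * (den0 s + den1 s * t)).

Definition cf_lo s := if odd (size s) then cf_eval s 1 else cf_eval s 0.
Definition cf_hi s := if odd (size s) then cf_eval s 0 else cf_eval s 1.

Lemma cf_lo_ge0 s : 0 <= cf_lo s.
Proof. by rewrite /cf_lo; case: odd; apply: cf_eval_ge0. Qed.

Definition cf_denom s := ((cf_den0 s + cf_den1 s) * (cf_den0 s + cf_num0 s))%N.

Lemma cf_sign_odd s : cf_sign s = if odd (size s) then -1 else 1.
Proof. by rewrite /cf_sign -signr_odd; case: odd; rewrite ?expr1 ?expr0. Qed.

Lemma cf_denom_mono s s' : size s' = size s -> (forall k, nth 0 s' k <= nth 0 s k)%N ->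
  (cf_denom s' <= cf_denom s)%N.
Proof.
move=> size_s' le_s'; have [le_p _ le_q le_q'] := cf_coefs_mono _ _ size_s' le_s'.
by apply: leq_mul; apply: leq_add.
Qed.

Lemma cf_denom_gt1 s : all (fun a => 0 < a)%N s -> s != [::] -> (1 < cf_denom s)%N.
Proof.
move=> s_pos s_nil.
have q_gt0 := cf_den0_gt0 _ s_pos; have p_gt0 := cf_num0_gt0 _ s_pos s_nil.
by rewrite (leq_trans _ (leq_mul (ltn_addr _ q_gt0) (leq_add q_gt0 p_gt0))).
Qed.

Section FixedDigits.
Variable s : seq nat.
Hypothesis s_pos : all (fun a => 0 < a)%N s.

Let q_gt0 : 0 < den0 s. Proof. by rewrite ltr0n cf_den0_gt0. Qed.

Lemma cf_eval_disp t : 0 <= t -> cf_eval s t = cf_eval s 0 + cf_sign s * cf_disp s t.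
Proof.
move=> t0; rewrite !cf_eval_mobius // /cf_disp /cf_sign -cf_coefs_det !mulr0 !addr0.
have : 0 < den0 s + den1 s * t by rewrite ltr_wpDr // mulr_ge0.
move: q_gt0; move: (den0 s) (den1 s) (num0 s) (num1 s) => q q' p p' q0 den_gt0.
by field; rewrite !gt_eqF.
Qed.

Lemma cf_disp_ge0 t : 0 <= t -> 0 <= cf_disp s t.
Proof.
move=> t0; apply: divr_ge0 => //; apply: mulr_ge0; first exact: ltW.
by rewrite addr_ge0 ?mulr_ge0 // ltW.
Qed.

Lemma cf_disp1_gt0 : 0 < cf_disp s 1.
Proof. by rewrite divr_gt0 // mulr_gt0 // mulr1 ltr_wpDr. Qed.

Lemma cf_disp_le1 t : 0 <= t <= 1 -> cf_disp s t <= cf_disp s 1.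
Proof.
move=> /andP[t0 t1].
have den_gt0 : 0 < den0 s + den1 s * t by rewrite ltr_wpDr // mulr_ge0.
have den1_gt0 : 0 < den0 s + den1 s by rewrite ltr_wpDr.
rewrite -subr_ge0; have -> : cf_disp s 1 - cf_disp s t =
    (1 - t) / ((den0 s + den1 s) * (den0 s + den1 s * t)) :> R.
  move: q_gt0 den_gt0 den1_gt0; rewrite /cf_disp.
  move: (den0 s) (den1 s) => q q' q0 den_gt0 den1_gt0.
  by field; rewrite !gt_eqF.
by rewrite divr_ge0 ?subr_ge0 // mulr_ge0 // ltW.
Qed.

Lemma cf_disp_onto r : 0 < r < cf_disp s 1 -> exists2 t, 0 < t < 1 & cf_disp s t = r.
Proof.
move=> /andP[r_gt0 r_lt].
have r_lt1 : r * (den0 s * (den0 s + den1 s)) < 1.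
  rewrite -ltr_pdivlMr ?mulr_gt0 ?ltr_wpDr // mul1r.
  by move: r_lt; rewrite /cf_disp mulr1 mul1r.
have q'_ge0 : 0 <= den1 s by rewrite ler0n.
rewrite /cf_disp; move: q_gt0 q'_ge0 r_lt1 {r_lt}.
move: (den0 s) (den1 s) => q q' q0 q'0 r_lt1.
have rqq_ge0 : 0 <= r * q * q by rewrite !mulr_ge0 // ltW.
have d_gt0 : 0 < 1 - r * q * q' by move: r_lt1; rewrite !mulrDr !mulrA; lra.
exists (r * q ^+ 2 / (1 - r * q * q')).
  rewrite divr_gt0 ?mulr_gt0 ?exprn_gt0 //= ltr_pdivrMr // mul1r.
  by move: r_lt1; rewrite expr2 !mulrDr !mulrA; lra.
field; apply/andP; split; first by rewrite gt_eqF.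
have -> : q * (1 - r * q * q') + q' * (r * q ^+ 2) = q by ring.
by rewrite gt_eqF.
Qed.

Lemma cf_lo_lt_hi : cf_lo s < cf_hi s.
Proof.
have := cf_disp1_gt0; rewrite /cf_lo /cf_hi (cf_eval_disp _ ler01) cf_sign_odd.
by case: odd => ?; lra.
Qed.

Lemma cf_begins_itvcc w : cf_begins s w -> 0 <= w < 1 -> cf_lo s <= w <= cf_hi s.
Proof.
move=> /cf_begins_evalP + /[dup] w01 => /[apply] -[t /andP[t0 t1] ->].
rewrite /cf_lo /cf_hi (cf_eval_disp _ t0) (cf_eval_disp _ ler01).
have := cf_disp_ge0 _ t0; have : cf_disp s t <= cf_disp s 1 by rewrite cf_disp_le1 ?t0 ?ltW.
by rewrite cf_sign_odd; case: odd => ? ?; apply/andP; split; lra.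
Qed.

Lemma itvoo_cf_begins w : cf_lo s < w < cf_hi s -> 0 < w < 1 /\ cf_begins s w.
Proof.
move=> w_in.
have r_in : 0 < cf_sign s * (w - cf_eval s 0) < cf_disp s 1.
  move: w_in; rewrite /cf_lo /cf_hi (cf_eval_disp _ ler01) cf_sign_odd.
  by case: odd => /andP[? ?]; apply/andP; split; lra.
have [t t01 disp_t] := cf_disp_onto _ r_in.
have -> : w = cf_eval s t.
  rewrite (cf_eval_disp t) ?ltW //; last by case/andP: t01.
  by rewrite disp_t mulrA cf_sign_odd; case: odd; lra.
exact: cf_eval_begins.
Qed.

Lemma one_add_cf_eval1 :
  1 + cf_eval s 1 = (1 + cf_eval s 0) * (1 + cf_sign s / (cf_denom s)%:R).
Proof.
rewrite !cf_eval_mobius // /cf_sign /cf_denom -cf_coefs_det natrM !natrD !mulr0 !addr0 !mulr1.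
have den1_gt0 : 0 < den0 s + den1 s by rewrite ltr_wpDr.
have qp_gt0 : 0 < den0 s + num0 s by rewrite (lt_le_trans q_gt0) // lerDl.
move: q_gt0 den1_gt0 qp_gt0; move: (den0 s) (den1 s) (num0 s) (num1 s).
by move=> q q' p p' ? ? ?; field; rewrite !gt_eqF.
Qed.

Lemma gauss_cdf_cf_gap : s != [::] -> gauss_cdf (cf_hi s) - gauss_cdf (cf_lo s) =
  (ln 2)^-1 * (if odd (size s) then - ln (1 - (cf_denom s)%:R^-1)
               else ln (1 + (cf_denom s)%:R^-1)).
Proof.
move=> s_nil; have D_gt1 : 1 < (cf_denom s)%:R :> R by rewrite ltr1n cf_denom_gt1.
have iD : 0 < ((cf_denom s)%:R^-1 : R) < 1.
  by rewrite invr_gt0 invf_lt1 ?(lt_trans ltr01) ?D_gt1.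
have u_gt : 0 < 1 + cf_eval s 0 by rewrite ltr_wpDr ?cf_eval_ge0.
have := one_add_cf_eval1; rewrite /cf_lo /cf_hi /gauss_cdf cf_sign_odd.
case: odd; rewrite ?mulN1r ?mul1r => ->; rewrite lnM ?posrE //; case/andP: iD; lra.
Qed.

End FixedDigits.

Lemma gauss_measure_cf_cylinder s : all (fun a => 0 < a)%N s ->
  gauss_measure (cf_cylinder s) = (gauss_cdf (cf_hi s) - gauss_cdf (cf_lo s))%:E.
Proof.
move=> s_pos; have lo0 := cf_lo_ge0 s; have lo_hi := cf_lo_lt_hi _ s_pos.
have density_ge0 w : 0 <= w -> (0 <= ((ln 2 * (1 + w))^-1)%:E)%E.
  by move=> w0; rewrite lee_fin invr_ge0 mulr_ge0 ?(ltW ln2_gt0) ?addr_ge0.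
apply/eqP; rewrite eq_le; apply/andP; split.
- rewrite -integral_gauss_density_cc //; apply: ge0_le_integral_setS.
    move=> w [[/andP[w0 w1] hw] _]; rewrite /= in_itv /=.
    by apply: cf_begins_itvcc; rewrite ?w1 ?ltW.
  by move=> w; rewrite /= in_itv /= => /andP[lw _]; apply/density_ge0/(le_trans lo0).
- rewrite -integral_gauss_density_oo //; apply: ge0_le_integral_setS.
    move=> w; rewrite /= in_itv /= => /itvoo_cf_begins[//|w01 hw].
    by split; [split|rewrite /= in_itv /=].
  by move=> w [_ /=]; rewrite in_itv /= => /andP[/ltW w0 _]; apply: density_ge0.
Qed.

Lemma gauss_measure_cf_cylinder_le s s' : all (fun a => 0 < a)%N s' ->
  size s' = size s -> s != [::] -> (forall k, nth 0 s' k <= nth 0 s k)%N ->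
  (gauss_measure (cf_cylinder s) <= gauss_measure (cf_cylinder s'))%E.
Proof.
move=> s'_pos size_s' s_nil le_s'.
have s_pos : all (fun a => 0 < a)%N s.
  apply/allP => _ /(nthP 0%N)[k ks <-]; apply: leq_trans (le_s' k).
  by apply: (all_nthP 0%N s'_pos); rewrite size_s'.
have s'_nil : s' != [::] by rewrite -size_eq0 size_s' size_eq0.
rewrite !gauss_measure_cf_cylinder // lee_fin !gauss_cdf_cf_gap // size_s'.
have D'_gt1 : 1 < (cf_denom s')%:R :> R by rewrite ltr1n cf_denom_gt1.
have le_D : (cf_denom s')%:R <= (cf_denom s)%:R :> R by rewrite ler_nat cf_denom_mono.
have le_iD : (cf_denom s)%:R^-1 <= (cf_denom s')%:R^-1 :> R.
  by rewrite lef_pV2 ?posrE //; lra.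
have iD_gt0 : 0 < (cf_denom s)%:R^-1 :> R by rewrite invr_gt0; lra.
have iD'_lt1 : (cf_denom s')%:R^-1 < 1 :> R by rewrite invf_lt1 //; lra.
rewrite ler_wpM2l ?invr_ge0 ?(ltW ln2_gt0) //.
by case: odd; rewrite ?lerN2 ler_ln ?posrE; lra.
Qed.

End ContinuedFractions.

Theorem lemma8 (R : realType) (n : nat) (x y : 'I_n -> nat)
  (hy : forall k, (0 < y k)%N) (hxy : forall k, (y k <= x k)%N) :
  (gauss_measure (@cylinder R n x) <= gauss_measure (@cylinder R n y))%E.
Proof.
case: n x y hy hxy => [|n] x y hy hxy; first by have -> : x = y by apply/funext => -[].
rewrite !cylinder_enum; apply: gauss_measure_cf_cylinder_le.
- by apply/allP => _ /mapP[k _ ->].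
- by rewrite !size_map.
- by rewrite -size_eq0 size_map size_enum_ord.
- move=> k; have [kn|kn] := ltnP k n.+1; last first.
    by rewrite !nth_default // size_map size_enum_ord.
  by rewrite -[k]/(nat_of_ord (Ordinal kn)) !nth_map_enum_ord.
Qed.
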